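(* Let $I\subseteq\mathbb{R}_+$ be a nonempty, non-singleton interval, let $n\in\mathbb{N}$, and let $\Phi: I\to\mathbb{R}_+$ be subadditive of order $n$. Then $\sqrt[n]{\Phi}$ is subadditive on $I$, i.e. $\sqrt[n]{\Phi(x+y)}\leq\sqrt[n]{\Phi(x)}+\sqrt[n]{\Phi(y)}$ for all $x,y\in I$ with $x+y\in I$.
   Context: $\mathbb{R}_+$ denotes the set of nonnegative real numbers. For $n\in\mathbb{N}$, a function $\Phi: I\to\mathbb{R}_+$ is called subadditive of order $n$ if for all $x,y\in I$ with $y>0$ and $x+y\in I$ one has $\Phi(x+y)\leq \Phi(x)+\frac{(x+y)^n-x^n}{y^n}\Phi(y)$. *)

From mathcomp Require Import all_boot all_order all_algebra.
From mathcomp Require Import all_classical all_reals all_analysis.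
Set Implicit Arguments. Unset Strict Implicit. Unset Printing Implicit Defensive.
Import Order.TTheory GRing.Theory Num.Theory.
Local Open Scope ring_scope.

Definition nonneg_interval {R : realType} (I : interval R) : Prop :=
  forall x, x \in I -> 0 <= x.

Definition nontrivial_interval {R : realType} (I : interval R) : Prop :=
  exists x y, [/\ x \in I, y \in I & x < y].

Definition nonneg_on {R : realType} (I : interval R) (Phi : R -> R) : Prop :=
  forall x, x \in I -> 0 <= Phi x.

Definition subadditive_of_order {R : realType} (n : nat) (I : interval R)
    (Phi : R -> R) : Prop :=
  forall x y, x \in I -> y \in I -> 0 < y -> x + y \in I ->
    Phi (x + y) <= Phi x + ((x + y) ^+ n - x ^+ n) / (y ^+ n) * Phi y.

(* nth root of a nonnegative real: a `^ (1/n) (powR, with 0 `^ r = 0 for r <> 0) *)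
Definition nroot {R : realType} (n : nat) (a : R) : R := a `^ (n%:R^-1).

From mathcomp Require Import all_boot all_order all_algebra.
From mathcomp Require Import all_classical all_reals all_analysis.
From mathcomp Require Import ring lra.
Import Order.TTheory GRing.Theory Num.Theory.
Local Open Scope ring_scope.

(* Write [a ^+ n = Phi x] and [b ^+ n = Phi y], and by symmetry assume
   [b / y <= a / x].  With [c := b / y] the weight in the order-n
   subadditivity inequality becomes [((x + y) ^+ n - x ^+ n) / y ^+ n * b ^+ n
   = (c x + b) ^+ n - (c x) ^+ n], and since [t |-> (t + b) ^+ n - t ^+ n] is
   nondecreasing on [R_+] and [c x <= a], this is at most [(a + b) ^+ n - a ^+ n].
   Hence [Phi (x + y) <= (a + b) ^+ n]; taking n-th roots gives the claim. *)

Lemma ler_expn_increment (R : realDomainType) (n : nat) (u v b : R) :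
  0 <= u -> u <= v -> 0 <= b ->
  (u + b) ^+ n - u ^+ n <= (v + b) ^+ n - v ^+ n.
Proof.
move=> u_ge0 le_uv b_ge0; have v_ge0 := le_trans u_ge0 le_uv.
suff: v ^+ n - u ^+ n <= (v + b) ^+ n - (u + b) ^+ n by lra.
rewrite !subrXX opprD addrACA subrr addr0.
apply: ler_wpM2l; first by rewrite subr_ge0.
apply: ler_sum => i _.
by apply: ler_pM; rewrite ?exprn_ge0 ?addr_ge0 // lerXn2r ?nnegrE ?addr_ge0 // lerDl.
Qed.

Lemma ler_scaled_expn_increment (R : realFieldType) (n : nat) (x y a b : R) :
  0 < x -> 0 < y -> 0 <= a -> 0 <= b -> b * x <= a * y ->
  ((x + y) ^+ n - x ^+ n) / y ^+ n * b ^+ n <= (a + b) ^+ n - a ^+ n.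
Proof.
move=> x_gt0 y_gt0 a_ge0 b_ge0 le_bx_ay.
pose c := b / y.
have y_neq0 : y != 0 by rewrite gt_eqF.
have cx_ge0 : 0 <= c * x by rewrite mulr_ge0 ?divr_ge0 // ltW.
have le_cx_a : c * x <= a by rewrite mulrAC ler_pdivrMr.
have -> : ((x + y) ^+ n - x ^+ n) / y ^+ n * b ^+ n
          = (c * x + b) ^+ n - (c * x) ^+ n.
  have -> : c * x + b = c * (x + y) by rewrite mulrDr divfK.
  by rewrite /c !exprMn exprVn; field; rewrite expf_neq0.
exact: ler_expn_increment.
Qed.

Lemma subadditive_of_order_le_expnD {R : realType} {n : nat} {I : interval R}
    {Phi : R -> R} (Phi_sub : subadditive_of_order n I Phi) (x y a b : R) :
  x \in I -> y \in I -> x + y \in I ->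
  0 < x -> 0 < y -> 0 <= a -> 0 <= b ->
  Phi x = a ^+ n -> Phi y = b ^+ n -> Phi (x + y) <= (a + b) ^+ n.
Proof.
move=> xI yI xyI x_gt0 y_gt0 a_ge0 b_ge0 Phi_x Phi_y.
wlog le_bx_ay : x y a b xI yI xyI x_gt0 y_gt0 a_ge0 b_ge0 Phi_x Phi_y /
    b * x <= a * y.
  move=> sym; have [|/ltW le_ay_bx] := leP (b * x) (a * y); first exact: sym.
  by rewrite addrC [a + b]addrC sym // addrC.
apply: (le_trans (Phi_sub x y xI yI y_gt0 xyI)).
rewrite Phi_x Phi_y -lerBrDl.
exact: ler_scaled_expn_increment.
Qed.

Lemma nroot_ge0 (R : realType) (n : nat) (a : R) : 0 <= nroot n a.
Proof. exact: powR_ge0. Qed.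

Lemma nrootK (R : realType) (n : nat) (a : R) :
  (0 < n)%N -> 0 <= a -> nroot n a ^+ n = a.
Proof.
move=> n_gt0 a_ge0; rewrite /nroot -powR_mulrn ?powR_ge0 // -powRrM mulVf ?powRr1 //.
by rewrite pnatr_eq0 -lt0n.
Qed.

Theorem theorem2p3 (R : realType) (I : interval R) (n : nat) (Phi : R -> R) :
  nonneg_interval I -> nontrivial_interval I -> (0 < n)%N ->
  nonneg_on I Phi -> subadditive_of_order n I Phi ->
  forall x y, x \in I -> y \in I -> x + y \in I ->
    nroot n (Phi (x + y)) <= nroot n (Phi x) + nroot n (Phi y).
Proof.
move=> I_ge0 _ n_gt0 Phi_ge0 Phi_sub x y xI yI xyI.
have [->|y_neq0] := eqVneq y 0; first by rewrite addr0 lerDl nroot_ge0.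
have [->|x_neq0] := eqVneq x 0; first by rewrite add0r lerDr nroot_ge0.
rewrite -(ler_pXn2r n_gt0) ?nnegrE ?addr_ge0 ?nroot_ge0 // nrootK ?Phi_ge0 //.
have x_gt0 : 0 < x by rewrite lt_def x_neq0 I_ge0.
have y_gt0 : 0 < y by rewrite lt_def y_neq0 I_ge0.
apply: (subadditive_of_order_le_expnD Phi_sub) => //;
  by rewrite ?nroot_ge0 // nrootK ?Phi_ge0.
Qed.
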